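(* Let $\Theta$ be a standard bunch in $(E\xrightarrow{Q}K,\gamma)$. Then $\mathcal O(X_\Theta)=\mathbb K$ (only constant global regular functions) if and only if $Q$ maps no ray of $\gamma$ to $\{0\}$ and the image $Q(\gamma)$ is strictly convex.
   Context: Work over an algebraically closed field $\mathbb K$ of characteristic zero. Lattices are finitely generated free abelian groups; cones are convex polyhedral; $\tau^\circ$ relative interior, $\preceq$ face relation, $\mathrm{lin}$ linear span. A projected cone $(E\xrightarrow{Q}K,\gamma)$ is a surjective lattice map with a simplicial full-dimensional cone $\gamma\subset E_{\mathbb Q}$; its dual is $(F\xrightarrow{P}N,\delta)$ with $F=\mathrm{Hom}(E,\mathbb Z)$, $N=\mathrm{Hom}(\ker Q,\mathbb Z)$, $P$ restriction, $\delta=\gamma^\vee$; $\gamma_0^*:=\gamma_0^\perp\cap\delta$. A bunch is a nonempty set $\Theta$ of projected faces $Q(\gamma_0)$, $\gamma_0\preceq\gamma$, such that a projected face $\tau_0$ lies in $\Theta$ iff $\emptyset\ne\tau_0^\circ\cap\tau^\circ\ne\tau^\circ$ for all $\tau\in\Theta\setminus\{\tau_0\}$; $\mathrm{cov}(\Theta)$ is the set of faces $\gamma_0\preceq\gamma$ minimal with $Q(\gamma_0)\supseteq\tau$ for some $\tau\in\Theta$. $\Theta$ is standard if for every facet $\gamma_i$ of $\gamma$: $K=Q(\mathrm{lin}(\gamma_i)\cap E)$ and some $\tau\in\Theta$ has $\tau^\circ\subset Q(\gamma_i)^\circ$. For standard $\Theta$, the cones $P(\sigma)$, $\sigma\preceq\gamma_0^*$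 with $\gamma_0\in\mathrm{cov}(\Theta)$, form a fan $\Delta(\Theta)$ in $N$, and $X_\Theta$ is its toric variety. *)

From HB Require Import structures.
From mathcomp Require Import all_boot all_order all_algebra.
Set Implicit Arguments. Unset Strict Implicit. Unset Printing Implicit Defensive.
Import Order.TTheory GRing.Theory Num.Theory.
Local Open Scope ring_scope.

Definition qcone (n : nat) := 'rV[rat]_n -> Prop.

Definition subcone n (A B : qcone n) : Prop := forall x, A x -> B x.

Definition dotq n (u x : 'rV[rat]_n) : rat := (u *m x^T) 0 0.

Definition qmx m n (A : 'M[int]_(m, n)) : 'M[rat]_(m, n) :=
  map_mx (fun z : int => z%:~R) A.

Definition cone_gen m n (G : 'M[rat]_(m, n)) : qcone n :=
  fun x => exists a : 'rV[rat]_m, (forall i, 0 <= a 0 i) /\ x = a *m G.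

Definition is_face n (F C : qcone n) : Prop :=
  exists u : 'rV[rat]_n, (forall x, C x -> 0 <= dotq u x) /\
    F = (fun x => C x /\ dotq u x = 0).

Definition lin n (C : qcone n) : qcone n :=
  fun x => exists (m : nat) (c : 'I_m -> rat) (v : 'I_m -> 'rV[rat]_n),
    (forall i, C (v i)) /\ x = \sum_(i < m) c i *: v i.

Definition has_dim n (C : qcone n) (d : nat) : Prop :=
  exists B : 'M[rat]_(d, n), row_free B /\ forall x, lin C x <-> (x <= B)%MS.

Definition is_facet n (F C : qcone n) : Prop :=
  is_face F C /\ exists d, has_dim C d.+1 /\ has_dim F d.

Definition is_ray n (F C : qcone n) : Prop := is_face F C /\ has_dim F 1.

(* relative interior (Rockafellar, Thm 6.4 characterization of ri for convex sets) *)
Definition relint n (C : qcone n) : qcone n :=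
  fun x => C x /\ forall y, C y -> exists e : rat, 0 < e /\ C ((1 + e) *: x - e *: y).

Definition image_cone r k (Q : 'M[int]_(r, k)) (C : qcone r) : qcone k :=
  fun y => exists x, C x /\ y = x *m qmx Q.

Definition strictly_convex n (C : qcone n) : Prop :=
  forall y, C y -> C (- y) -> y = 0.

Section Bunch.
Variables (r k : nat) (Q : 'M[int]_(r, k)) (gamma : qcone r).

Definition is_projface (tau : qcone k) : Prop :=
  exists g0, is_face g0 gamma /\ tau = image_cone Q g0.

Definition is_bunch (Theta : qcone k -> Prop) : Prop :=
  (exists tau, Theta tau) /\
  (forall tau, Theta tau -> is_projface tau) /\
  (forall tau0, is_projface tau0 ->
     (Theta tau0 <->
      forall tau, Theta tau -> tau <> tau0 ->
        (fun x => relint tau0 x /\ relint tau x) <> (fun _ => False) /\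
        (fun x => relint tau0 x /\ relint tau x) <> relint tau)).

Definition covers (Theta : qcone k -> Prop) (g0 : qcone r) : Prop :=
  exists tau, Theta tau /\ subcone tau (image_cone Q g0).

Definition cov (Theta : qcone k -> Prop) (g0 : qcone r) : Prop :=
  is_face g0 gamma /\ covers Theta g0 /\
  forall g1, is_face g1 gamma -> is_face g1 g0 -> covers Theta g1 -> g1 = g0.

Definition is_standard (Theta : qcone k -> Prop) : Prop :=
  forall gi, is_facet gi gamma ->
    (forall y : 'rV[int]_k, exists x : 'rV[int]_r, lin gi (qmx x) /\ x *m Q = y) /\
    (exists tau, Theta tau /\ subcone (relint tau) (relint (image_cone Q gi))).

(* dual side: F = Hom(E,Z) identified with Z^r via dotq; delta = gamma^vee *)
Definition dual_cone : qcone r := fun u => forall x, gamma x -> 0 <= dotq u x.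

Definition face_star (g0 : qcone r) : qcone r :=
  fun u => dual_cone u /\ forall x, g0 x -> dotq u x = 0.

(* sigma (a cone in F_Q) such that P(sigma) is a cone of the fan Delta(Theta) *)
Definition fan_cone (Theta : qcone k -> Prop) (sigma : qcone r) : Prop :=
  exists g0, cov Theta g0 /\ is_face sigma (face_star g0).

(* The character lattice of the torus of X_Theta is M = Hom(N,Z) = ker Q in E.
   m in M lies in P(sigma)^vee iff <P(f), m> = <f, m> >= 0 for all f in sigma. *)
Definition in_dual_image (sigma : qcone r) (m : 'rV[int]_r) : Prop :=
  forall f, sigma f -> 0 <= dotq f (qmx m).

Variable kk : fieldType.

(* elements of the group algebra kk[M], M = ker Q: finitely supported
   functions on E with support in ker Q *)
Definition group_alg_elt (f : 'rV[int]_r -> kk) : Prop :=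
  (exists s : seq 'rV[int]_r, forall m, f m != 0 -> m \in s) /\
  (forall m, f m != 0 -> m *m Q = 0).

(* O(X_Theta) = intersection over the cones P(sigma) of the fan of the
   coordinate rings kk[P(sigma)^vee cap M] of the affine charts, inside kk[M] *)
Definition global_functions (Theta : qcone k -> Prop) : (('rV[int]_r -> kk) -> Prop) :=
  fun f => group_alg_elt f /\
    forall sigma, fan_cone Theta sigma -> forall m, f m != 0 -> in_dual_image sigma m.

Definition constant_functions : (('rV[int]_r -> kk) -> Prop) :=
  fun f => forall m, f m != 0 -> m = 0.

End Bunch.

From HB Require Import structures.
From mathcomp Require Import all_boot all_order all_algebra.
From mathcomp Require Import lra.
From Stdlib Require Import Classical FunctionalExtensionality PropExtensionality.
Set Implicit Arguments. Unset Strict Implicit. Unset Printing Implicit Defensive.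
Import Order.TTheory GRing.Theory Num.Theory.
Local Open Scope ring_scope.

(* Write gamma as the cone spanned by the rows g_j of the invertible matrix G.
   A global function on X_Theta is a combination of characters chi^m, m in ker Q,
   with m in P(sigma)^vee for every cone of the fan. By standardness, the facet
   spanned by the g_l, l <> j, contains some tau in Theta: since Q(facet) is
   closed and contains the relative interior of tau, it contains tau. Hence some
   covering face gamma_0 avoids g_j, and the dual coordinate form e_j^* lies in
   gamma_0^*; so every such m has nonnegative coordinates, i.e. m lies in gamma.
   Conversely every fan cone lies in gamma^vee, so each chi^m with m in
   gamma /\ ker Q is global. Thus O(X_Theta) = K iff gamma /\ ker Q = 0, and this
   is the ray and strict convexity condition: if m = sum a_j g_j <> 0 is in ker Q
   with a_j > 0, then both Q(g_j) and -Q(g_j) lie in Q(gamma). *)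

Lemma pigeonhole_infinitely_often (T : finType) (P : T -> nat -> Prop) :
  (forall N, exists2 t, (N <= t)%N & exists l, P l t) ->
  exists l, forall N, exists2 t, (N <= t)%N & P l t.
Proof.
move=> often; apply: NNPP => none.
have [bound boundP] : exists bound : T -> nat,
    forall l t, (bound l <= t)%N -> ~ P l t.
  apply: (fin_all_exists (P := fun l b => forall t, (b <= t)%N -> ~ P l t)) => l.
  apply: NNPP => unbounded; apply: none; exists l => N.
  apply: NNPP => noN; apply: unbounded; exists N => t Nt Plt.
  by apply: noN; exists t.
have [t bound_t [l Plt]] := often (\max_l bound l)%N.
by apply: (boundP l t _ Plt); apply: leq_trans (leq_bigmax (F := bound) l) bound_t.
Qed.

Lemma ex_minimal_subset (T : finType) (P : {set T} -> Prop) (A : {set T}) :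
  P A -> exists B : {set T},
    [/\ B \subset A, P B & forall C : {set T}, C \subset B -> P C -> C = B].
Proof.
have [N] := ubnP #|A|; elim: N A => // N IH A ltAN PA.
case: (classic (exists2 C : {set T}, C \proper A & P C)) => [[C ltCA PC]|noC].
  have [|B [BC PB minB]] := IH C _ PC; first exact: leq_trans (proper_card ltCA) _.
  by exists B; split=> //; apply: subset_trans BC (proper_sub ltCA).
exists A; split=> // C CA PC; apply: NNPP => neCA; apply: noC; exists C => //.
by rewrite properEneq CA andbT; apply/eqP.
Qed.

Definition supported_on m (I : {set 'I_m}) (a : 'rV[rat]_m) : Prop :=
  forall i, i \notin I -> a 0 i = 0.

Section RowCone.
Variables (m n : nat) (V : 'M[rat]_(m, n)).
Implicit Types (I J : {set 'I_m}) (a b d : 'rV[rat]_m).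

Definition cone_rows (I : {set 'I_m}) : qcone n :=
  fun y => exists a : 'rV_m, [/\ forall i, 0 <= a 0 i, supported_on I a & y = a *m V].

Definition free_rows (I : {set 'I_m}) : Prop :=
  forall d : 'rV_m, supported_on I d -> d *m V = 0 -> d = 0.

Lemma cone_rows0 I : cone_rows I 0.
Proof. by exists 0; split=> [i|i _|]; rewrite ?mxE ?mul0mx. Qed.

Lemma cone_rowsD I x y : cone_rows I x -> cone_rows I y -> cone_rows I (x + y).
Proof.
move=> [a [a0 aI ->]] [b [b0 bI ->]]; exists (a + b); split; last by rewrite mulmxDl.
- by move=> i; rewrite mxE addr_ge0.
- by move=> i iI; rewrite mxE aI // bI // addr0.
Qed.

Lemma cone_rowsZ I c x : 0 <= c -> cone_rows I x -> cone_rows I (c *: x).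
Proof.
move=> c0 [a [a0 aI ->]]; exists (c *: a); split; last by rewrite scalemxAl.
- by move=> i; rewrite mxE mulr_ge0.
- by move=> i iI; rewrite mxE aI // mulr0.
Qed.

Lemma cone_rows_row I i : i \in I -> cone_rows I (row i V).
Proof.
move=> iI; exists (delta_mx 0 i); split; last exact: rowE.
  by move=> j; rewrite mxE ler0n.
by move=> j; rewrite mxE; case: (eqVneq j i) => [->|]; rewrite ?iI.
Qed.

Lemma cone_rows_single j y : cone_rows [set j] y -> exists c, y = c *: row j V.
Proof.
move=> [a [_ aj ->]]; exists (a 0 j); rewrite rowE scalemxAl; congr (_ *m _).
apply/rowP => i; rewrite !mxE; case: (eqVneq i j) => [->|ij]; first by rewrite mulr1.
by rewrite mulr0 aj // inE.
Qed.

Lemma cone_rows_subset I J : I \subset J -> subcone (cone_rows I) (cone_rows J).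
Proof.
move=> IJ y [a [a0 aI ->]]; exists a; split=> // i iJ.
by apply: aI; apply: contra iJ; apply: (subsetP IJ).
Qed.

Lemma cone_rows_gens I J :
  (forall i, i \in I -> cone_rows J (row i V)) -> subcone (cone_rows I) (cone_rows J).
Proof.
move=> gens y [b [b0 bI ->]]; rewrite mulmx_sum_row.
apply: (big_ind (cone_rows J)); [exact: cone_rows0|exact: cone_rowsD|].
move=> i _; case: (boolP (i \in I)) => iI; first exact/cone_rowsZ/gens.
by rewrite bI // scale0r; apply: cone_rows0.
Qed.

Lemma relint_cone_rows I a :
  (forall i, i \in I -> 1 <= a 0 i) -> supported_on I a -> relint (cone_rows I) (a *m V).
Proof.
move=> a1 aI; have a0 i : 0 <= a 0 i.
  by case: (boolP (i \in I)) => [/a1|/aI ->] //; apply: le_trans.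
split; first by exists a.
move=> _ [b [b0 bI ->]]; pose e := (1 + \sum_i b 0 i)^-1.
have sum_gt0 : 0 < 1 + \sum_i b 0 i by rewrite ltr_wpDr // sumr_ge0.
have e0 : 0 < e by rewrite invr_gt0.
have eb i : e * b 0 i <= 1.
  rewrite mulrC ler_pdivrMr // mul1r (bigD1 i) //= addrCA lerDl.
  by rewrite addr_ge0 ?sumr_ge0.
exists e; split=> //; exists ((1 + e) *: a - e *: b); split; last first.
- by rewrite mulmxBl -!scalemxAl.
- by move=> i iI; rewrite !mxE aI // bI // !mulr0 subrr.
move=> i; rewrite !mxE; case: (boolP (i \in I)) => [iI|/[dup] /aI -> /bI ->].
  have := a1 i iI; have := eb i; have := mulr_ge0 (ltW e0) (a0 i).
  by rewrite mulrDl mul1r; lra.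
by rewrite !mulr0 subrr.
Qed.

(* Subtract the largest multiple of a positive relation d among the generators
   that keeps the coefficients nonnegative. *)
Lemma cone_rows_drop I y :
  ~ free_rows I -> cone_rows I y -> exists2 l, l \in I & cone_rows (I :\ l) y.
Proof.
move=> not_free [c [c0 cI ->]].
have [d [dI dV [l0 dl0]]] :
    exists d, [/\ supported_on I d, d *m V = 0 & exists l, 0 < d 0 l].
  apply: NNPP => no_pos; apply: not_free => d dI dV; apply/rowP => l; rewrite mxE.
  case: (ltgtP (d 0 l) 0) => // [dneg|dpos]; case: no_pos.
    exists (- d); split; last by exists l; rewrite mxE oppr_gt0.
      by move=> i /dI; rewrite mxE => ->; rewrite oppr0.
    by rewrite mulNmx dV oppr0.
  by exists d; split=> //; exists l.
case: (@arg_minP _ _ _ l0 (fun i => 0 < d 0 i) (fun i => c 0 i / d 0 i) dl0).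
move=> l dl lmin; pose lam := c 0 l / d 0 l.
have lam0 : 0 <= lam by rewrite divr_ge0 // ltW.
exists l; first by apply: contraTT dl => /dI ->; rewrite ltxx.
exists (c - lam *: d); split; last by rewrite mulmxBl -scalemxAl dV scaler0 subr0.
- move=> i; rewrite !mxE subr_ge0; case: (ltrP 0 (d 0 i)) => di.
    by rewrite -ler_pdivlMr //; apply: lmin.
  by apply: le_trans (c0 i); rewrite mulr_ge0_le0.
- move=> i; rewrite in_setD1 negb_and negbK => /orP [/eqP ->|iI].
    by rewrite !mxE /lam divfK ?subrr // gt_eqF.
  by rewrite !mxE cI // dI // mulr0 subrr.
Qed.

Lemma cone_rows_caratheodory I y :
  cone_rows I y -> exists J, [/\ J \subset I, free_rows J & cone_rows J y].
Proof.
have [N] := ubnP #|I|; elim: N I => // N IH I ltIN yI.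
case: (classic (free_rows I)) => [freeI|not_free]; first by exists I.
have [l lI yIl] := cone_rows_drop not_free yI.
have [|J [JIl freeJ yJ]] := IH (I :\ l) _ yIl; first by rewrite (cardsD1 l) lI in ltIN.
by exists J; split=> //; apply: subset_trans JIl (subsetDl _ _).
Qed.

(* With independent generators the coefficients of v + t w are affine in t. *)
Lemma cone_rows_recession_free J v w :
  free_rows J -> (forall N, exists2 t, (N <= t)%N & cone_rows J (v + t%:R *: w)) ->
  cone_rows J w.
Proof.
move=> freeJ often.
have coef_uniq a b : supported_on J a -> supported_on J b -> a *m V = b *m V -> a = b.
  move=> aJ bJ abV; apply/eqP; rewrite -subr_eq0; apply/eqP; apply: freeJ.
    by move=> i iJ; rewrite !mxE aJ // bJ // subrr.
  by rewrite mulmxBl abV subrr.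
have [t1 _ [c1 [c1_ge0 c1J e1]]] := often 0%N.
have [t2 t12 [c2 [_ c2J e2]]] := often t1.+1.
pose b : 'rV[rat]_m := (t2%:R - t1%:R)^-1 *: (c2 - c1).
have bJ : supported_on J b by move=> i iJ; rewrite !mxE c1J ?c2J // subrr mulr0.
have wE : w = b *m V.
  rewrite -scalemxAl mulmxBl -e1 -e2 opprD addrACA subrr add0r -scalerBl scalerA.
  by rewrite mulVf ?scale1r // subr_eq0 eqr_nat gtn_eqF.
clearbody b; exists b; split=> // i; rewrite leNgt; apply/negP => bi_neg.
have [t tN [c [c_ge0 cJ e]]] := often (t1 + Num.Def.archi_bound (c1 0 i / - b 0 i)%R)%N.
have cE : c = c1 + (t%:R - t1%:R) *: b.
  apply: coef_uniq => //; first by move=> j jJ; rewrite !mxE c1J ?bJ // mulr0 addr0.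
  by rewrite -e mulmxDl -scalemxAl -wE -e1 scalerBl addrCA addrK addrC.
have large : c1 0 i / - b 0 i < t%:R - t1%:R.
  apply: lt_le_trans (archi_boundP _) _; first by rewrite divr_ge0 // oppr_ge0 ltW.
  by rewrite lerBrDr -natrD ler_nat addnC.
move: (c_ge0 i) large; rewrite cE !mxE ltr_pdivrMr ?oppr_gt0 // mulrN.
by move: (_ * b 0 i) => x; lra.
Qed.

Lemma cone_rows_recession I v w :
  (forall N, exists2 t, (N <= t)%N & cone_rows I (v + t%:R *: w)) -> cone_rows I w.
Proof.
move=> often; have [J oftenJ] : exists J, forall N, exists2 t, (N <= t)%N &
    [/\ J \subset I, free_rows J & cone_rows J (v + t%:R *: w)].
  apply: pigeonhole_infinitely_often => N.
  by have [t Nt /cone_rows_caratheodory vt] := often N; exists t.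
have [_ _ [JI freeJ _]] := oftenJ 0%N.
apply: cone_rows_subset JI _ _; apply: (cone_rows_recession_free (v := v) freeJ) => N.
by have [t Nt [_ _ vt]] := oftenJ N; exists t.
Qed.

Lemma cone_rows_of_relint I J :
  subcone (relint (cone_rows I)) (cone_rows J) -> subcone (cone_rows I) (cone_rows J).
Proof.
move=> relintIJ; apply: cone_rows_gens => i iI.
pose a : 'rV[rat]_m := \row_l (l \in I)%:R.
apply: (cone_rows_recession (v := a *m V)) => N; exists N => //.
apply: relintIJ; rewrite rowE scalemxAl -mulmxDl; apply: relint_cone_rows => l.
  by move=> lI; rewrite !mxE lI lerDl mulr_ge0 ?ler0n.
move=> lI; rewrite !mxE (negbTE lI) add0r.
by case: (eqVneq l i) lI => [->|]; rewrite ?iI // andbF mulr0.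
Qed.

End RowCone.

Lemma image_cone_rows m n k (V : 'M[rat]_(m, n)) (Q : 'M[int]_(n, k)) I :
  image_cone Q (cone_rows V I) = cone_rows (V *m qmx Q) I.
Proof.
apply: functional_extensionality => y; apply: propositional_extensionality; split.
  by move=> [_ [[a [a0 aI ->]] ->]]; exists a; rewrite mulmxA.
by move=> [a [a0 aI ->]]; exists (a *m V); split; [exists a | rewrite mulmxA].
Qed.

Lemma face_subcone n (F C : qcone n) : is_face F C -> subcone F C.
Proof. by move=> [u [_ ->]] x []. Qed.

Lemma dotqE n (u x : 'rV[rat]_n) : dotq u x = \sum_i u 0 i * x 0 i.
Proof. by rewrite /dotq mxE; apply: eq_bigr => i _; rewrite mxE. Qed.

Lemma dotqC n (u x : 'rV[rat]_n) : dotq u x = dotq x u.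
Proof. by rewrite !dotqE; apply: eq_bigr => i _; rewrite mulrC. Qed.

Lemma dotq0 n (u : 'rV[rat]_n) : dotq u 0 = 0.
Proof. by rewrite /dotq trmx0 mulmx0 mxE. Qed.

Lemma dotq_delta n (u : 'rV[rat]_n) j : dotq u (delta_mx 0 j) = u 0 j.
Proof. by rewrite /dotq trmx_delta -colE mxE. Qed.

Lemma dotq_mulmx m n (u : 'rV[rat]_n) (a : 'rV[rat]_m) (V : 'M[rat]_(m, n)) :
  dotq u (a *m V) = dotq (u *m V^T) a.
Proof. by rewrite /dotq trmx_mul mulmxA. Qed.

Lemma is_face_refl n (C : qcone n) : is_face C C.
Proof.
exists 0; split=> [x _|]; first by rewrite dotqC dotq0.
apply: functional_extensionality => x; apply: propositional_extensionality.
by rewrite dotqC dotq0; split=> [|[]].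
Qed.

Lemma qmx0 m n : qmx (0 : 'M[int]_(m, n)) = 0.
Proof. exact: map_mx0. Qed.

Lemma qmxM m n p (A : 'M[int]_(m, n)) (B : 'M[int]_(n, p)) :
  qmx (A *m B) = qmx A *m qmx B.
Proof. exact: map_mxM. Qed.

Lemma qmx_inj m n : injective (@qmx m n).
Proof.
move=> A B /matrixP AB; apply/matrixP => i j.
by apply: (@intr_inj rat); have := AB i j; rewrite !mxE.
Qed.

Lemma clear_denominators n (x : 'rV[rat]_n) :
  exists2 c : rat, 0 < c & exists z : 'rV[int]_n, qmx z = c *: x.
Proof.
exists (\prod_i denq (x 0 i))%:~R; first by rewrite ltr0z prodr_gt0.
exists (\row_i (numq (x 0 i) * \prod_(l | l != i) denq (x 0 l))).
apply/rowP => i; rewrite !mxE intrM numqE [X in _ = X%:~R * _](bigD1 i) //= intrM.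
by rewrite [RHS]mulrC mulrA.
Qed.

Lemma lin_row_comb m n (C : qcone n) (V : 'M[rat]_(m, n)) (a : 'rV[rat]_m) :
  C 0 -> (forall i, a 0 i != 0 -> C (row i V)) -> lin C (a *m V).
Proof.
move=> C0 CV; exists m, (fun i => a 0 i), (fun i => if a 0 i != 0 then row i V else 0).
split; first by move=> i; case: ifP => [/CV|].
rewrite mulmx_sum_row; apply: eq_bigr => i _; case: ifP => // /negbFE/eqP ->.
by rewrite !scale0r.
Qed.

Lemma lin_submx m n (C : qcone n) (S : 'M[rat]_(m, n)) :
  (forall x, C x -> (x <= S)%MS) -> forall x, lin C x -> (x <= S)%MS.
Proof.
move=> CS _ [p [c [v [Cv ->]]]]; apply: summx_sub => i _.
by apply: scalemx_sub; apply: CS.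
Qed.

Lemma has_dim_rank m n (C : qcone n) (S : 'M[rat]_(m, n)) :
  (forall x, lin C x <-> (x <= S)%MS) -> has_dim C (\rank S).
Proof.
move=> linC; exists (row_base S); split; first exact: row_base_free.
by move=> x; rewrite eq_row_base.
Qed.

Lemma has_dim_nonzero n (C : qcone n) d :
  has_dim C d.+1 -> exists2 v, C v & v != 0.
Proof.
move=> [B [freeB linC]]; apply: NNPP => C0.
have : lin C (row 0 B) by apply/linC; apply: row_sub.
move=> [p [c [v [Cv rowE0]]]].
have v0 i : v i = 0 by apply: NNPP => vi; apply: C0; exists (v i) => //; apply/eqP.
have : (delta_mx 0 0 : 'rV[rat]_d.+1) *m B = 0 *m B.
  by rewrite mul0mx -rowE rowE0 big1 // => i _; rewrite v0 scaler0.
move/(row_free_inj freeB)/matrixP/(_ 0 0); rewrite !mxE /=.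
by move/eqP; rewrite oner_eq0.
Qed.

Section SimplicialCone.
Variables (r : nat) (G : 'M[rat]_r).
Hypothesis G_unit : G \in unitmx.
Implicit Types (I J : {set 'I_r}) (a c : 'rV[rat]_r).
Local Notation gamma := (cone_gen G).

Lemma mulmxG_inj m : injective (fun a : 'M[rat]_(m, r) => a *m G).
Proof. by apply: row_free_inj; rewrite row_free_unit. Qed.

Lemma cone_genE : gamma = cone_rows G setT.
Proof.
apply: functional_extensionality => x; apply: propositional_extensionality.
by split=> [[a [a0 ->]]|[a [a0 _ ->]]]; exists a => //; split=> // i; rewrite inE.
Qed.

Lemma cone_gen_row i : gamma (row i G).
Proof. by rewrite cone_genE; apply: cone_rows_row; rewrite inE. Qed.

Lemma cone_gen_coord x : (forall j, 0 <= (x *m invmx G) 0 j) -> gamma x.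
Proof. by move=> x0; exists (x *m invmx G); rewrite mulmxKV. Qed.

Lemma cone_gen_pointed : strictly_convex gamma.
Proof.
move=> _ [a [a0 ->]] [b [b0 abG]].
have : (a + b) *m G = 0 by rewrite mulmxDl -abG addrN.
rewrite -(mul0mx _ G) => /mulmxG_inj /rowP ab0.
suff -> : a = 0 by rewrite mul0mx.
apply/rowP => i; have := ab0 i; have := a0 i; have := b0 i; rewrite !mxE; lra.
Qed.

Lemma dotq_invmx c a : dotq (c *m (invmx G)^T) (a *m G) = dotq c a.
Proof. by rewrite dotq_mulmx -mulmxA -trmx_mul mulmxV // trmx1 mulmx1. Qed.

Lemma dotq_dual_coord j a : dotq (delta_mx 0 j *m (invmx G)^T) (a *m G) = a 0 j.
Proof. by rewrite dotq_invmx dotqC dotq_delta. Qed.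

Lemma face_cone_gen c : (forall i, 0 <= c 0 i) ->
  (fun x => gamma x /\ dotq (c *m (invmx G)^T) x = 0) = cone_rows G [set i | c 0 i == 0].
Proof.
move=> c0; apply: functional_extensionality => x; apply: propositional_extensionality.
split=> [[[a [a0 ->]]]|[a [a0 aI ->]]].
  rewrite dotq_invmx dotqE => /psumr_eq0P ca0; exists a; split=> // i.
  rewrite inE => ci; have /eqP := ca0 (fun i _ => mulr_ge0 (c0 i) (a0 i)) i isT.
  by rewrite mulf_eq0 (negbTE ci) => /eqP.
split; first by exists a.
rewrite dotq_invmx dotqE big1 // => i _.
case: (boolP (i \in [set i | c 0 i == 0])) => [|/aI ->]; last by rewrite mulr0.
by rewrite inE => /eqP ->; rewrite mul0r.
Qed.

Lemma is_face_cone_gen g : is_face g gamma -> exists I, g = cone_rows G I.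
Proof.
move=> [u [u0 ->]]; exists [set i | (u *m G^T) 0 i == 0].
have uE : u = (u *m G^T) *m (invmx G)^T.
  by rewrite -mulmxA -trmx_mul mulVmx // trmx1 mulmx1.
rewrite {1}uE face_cone_gen // => i.
by rewrite -dotq_delta -dotq_mulmx -rowE; apply: u0; apply: cone_gen_row.
Qed.

Lemma cone_rows_face I : is_face (cone_rows G I) gamma.
Proof.
pose c : 'rV[rat]_r := \row_i (i \notin I)%:R.
have c0 i : 0 <= c 0 i by rewrite mxE ler0n.
exists (c *m (invmx G)^T); split.
  move=> _ [a [a0 ->]]; rewrite dotq_invmx dotqE sumr_ge0 // => i _.
  exact: mulr_ge0.
rewrite face_cone_gen //; congr cone_rows; apply/setP => i.
by rewrite !inE mxE pnatr_eq0 eqb0 negbK.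
Qed.

Lemma cone_rows_subcone_subset I J :
  subcone (cone_rows G I) (cone_rows G J) -> I \subset J.
Proof.
move=> IJ; apply/subsetP => i iI; have [a [_ aJ e]] := IJ _ (cone_rows_row G iI).
have ea : delta_mx 0 i = a by move: e; rewrite rowE => /mulmxG_inj.
apply: contraT => /aJ; rewrite -ea mxE !eqxx => /eqP.
by rewrite oner_eq0.
Qed.

Lemma has_dim_cone_gen : has_dim gamma r.
Proof.
rewrite -[X in has_dim _ X](mxrank1 rat); apply: has_dim_rank => x; split=> [_|_].
  exact: submx1.
rewrite -(mulmxKV G_unit x); apply: lin_row_comb => [|i _].
  by rewrite cone_genE; apply: cone_rows0.
exact: cone_gen_row.
Qed.

Lemma has_dim_facet j : has_dim (cone_rows G [set~ j]) r.-1.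
Proof.
pose c := invmx G *m (delta_mx j 0 : 'cV_r).
have cE (x : 'rV[rat]_r) : (x *m c == 0) = ((x *m invmx G) 0 j == 0).
  rewrite mulmxA -colE; move: (x *m invmx G) => y; apply/eqP/eqP => [/matrixP/(_ 0 0)|yj0].
    by rewrite !mxE.
  by apply/matrixP => p q; rewrite !mxE (ord1 p).
have c_neq0 : c^T != 0.
  rewrite trmx_eq0; apply/eqP => /(congr1 (mulmx G)); rewrite mulKVmx // mulmx0.
  by move/matrixP/(_ j 0); rewrite !mxE !eqxx.
have -> : r.-1 = \rank (kermx c) by rewrite mxrank_ker -mxrank_tr rank_rV c_neq0 subn1.
apply: has_dim_rank => x; split.
  apply: lin_submx => _ [a [_ aj ->]]; apply/sub_kermxP/eqP.
  by rewrite cE mulmxK // aj // !inE eqxx.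
move/sub_kermxP/eqP; rewrite cE => /eqP xj0.
rewrite -(mulmxKV G_unit x); apply: lin_row_comb => [|i xi]; first exact: cone_rows0.
by apply: cone_rows_row; rewrite !inE; apply: contra xi => /eqP ->; rewrite xj0.
Qed.

Lemma has_dim_ray j : has_dim (cone_rows G [set j]) 1.
Proof.
have row_neq0 : row j G != 0.
  apply/eqP; rewrite rowE -(mul0mx 1 G) => /mulmxG_inj /rowP/(_ j)/eqP.
  by rewrite !mxE !eqxx oner_eq0.
have -> : 1%N = \rank (row j G) by rewrite rank_rV row_neq0.
apply: has_dim_rank => x; split.
  apply: lin_submx => _ /cone_rows_single [c ->]; exact: scalemx_sub.
move/sub_rVP => [c ->]; rewrite rowE scalemxAl; apply: lin_row_comb => [|i].
  exact: cone_rows0.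
rewrite !mxE; case: (eqVneq i j) => [-> _|]; last by rewrite andbF mulr0 eqxx.
by apply: cone_rows_row; rewrite inE.
Qed.

Lemma is_ray_row j : is_ray (cone_rows G [set j]) gamma.
Proof. by split; [apply: cone_rows_face | apply: has_dim_ray]. Qed.

Lemma is_facet_row j : is_facet (cone_rows G [set~ j]) gamma.
Proof.
split; first exact: cone_rows_face.
by exists r.-1; rewrite prednK ?(leq_ltn_trans _ (ltn_ord j)) //; split;
  [apply: has_dim_cone_gen | apply: has_dim_facet].
Qed.

End SimplicialCone.

Definition cone_ker_trivial r k (Q : 'M[int]_(r, k)) (C : qcone r) : Prop :=
  forall x, C x -> x *m qmx Q = 0 -> x = 0.

Lemma ray_image_neq0 r k (Q : 'M[int]_(r, k)) (C rho : qcone r) :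
  cone_ker_trivial Q C -> is_ray rho C -> image_cone Q rho <> (fun y => y = 0).
Proof.
move=> kerC [rho_face rho_dim] rho0; have [v rho_v v_neq0] := has_dim_nonzero rho_dim.
have : image_cone Q rho (v *m qmx Q) by exists v.
rewrite rho0 => vQ; move/eqP: v_neq0; apply.
by apply: kerC vQ; apply: face_subcone rho_face _ rho_v.
Qed.

Section ImageCone.
Variables (r k : nat) (Q : 'M[int]_(r, k)) (G : 'M[rat]_r).
Hypothesis G_unit : G \in unitmx.
Local Notation gamma := (cone_gen G).

Lemma strictly_convex_image_cone :
  cone_ker_trivial Q gamma -> strictly_convex (image_cone Q gamma).
Proof.
move=> kerQ _ [x1 [gx1 ->]] [x2 [gx2 e2]].
have x12 : x1 + x2 = 0.
  apply: kerQ; last by rewrite mulmxDl -e2 addrN.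
  by rewrite cone_genE in gx1 gx2 *; apply: cone_rowsD.
have x1E : x1 = - x2 by apply/eqP; rewrite -addr_eq0 x12.
have x2_0 : x2 = 0 by apply: (cone_gen_pointed G_unit gx2); rewrite -x1E.
by rewrite x1E x2_0 oppr0 mul0mx.
Qed.

Lemma cone_ker_trivial_of_image :
  (forall rho, is_ray rho gamma -> image_cone Q rho <> (fun y => y = 0)) ->
  strictly_convex (image_cone Q gamma) -> cone_ker_trivial Q gamma.
Proof.
move=> rays_nonzero pointed _ [a [a0 ->]] aQ.
suff -> : a = 0 by rewrite mul0mx.
apply/rowP => j; rewrite mxE; apply/eqP; apply: contraT => aj_neq0.
have aj_gt0 : 0 < a 0 j by rewrite lt_def aj_neq0 a0.
have gjQ : row j G *m qmx Q = 0.
  apply: pointed; first by exists (row j G); split=> //; apply: cone_gen_row.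
  exists (((a 0 j)^-1 *: a - delta_mx 0 j) *m G); split.
    exists ((a 0 j)^-1 *: a - delta_mx 0 j); split=> // i; rewrite !mxE.
    case: (eqVneq i j) => [->|_]; first by rewrite mulVf ?subrr.
    by rewrite /= subr0 mulr_ge0 // invr_ge0 ltW.
  by rewrite -mulmxA mulmxBl -scalemxAl mulmxA aQ scaler0 sub0r rowE mulmxA.
case: (rays_nonzero _ (is_ray_row G_unit j)); rewrite image_cone_rows.
apply: functional_extensionality => y; apply: propositional_extensionality.
split=> [|->]; last exact: cone_rows0.
by move=> /cone_rows_single [c ->]; rewrite row_mul gjQ scaler0.
Qed.

End ImageCone.

Section GlobalFunctions.
Variables (r k : nat) (Q : 'M[int]_(r, k)) (G : 'M[rat]_r) (kk : fieldType)
  (Theta : qcone k -> Prop).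
Local Notation gamma := (cone_gen G).
Local Notation global := (global_functions Q gamma (kk := kk) Theta).

Lemma constant_global f : constant_functions f -> global f.
Proof.
move=> fc; split; [split|].
- by exists [:: 0] => m /fc ->; rewrite mem_head.
- by move=> m /fc ->; rewrite mul0mx.
- by move=> sigma _ m /fc -> u _; rewrite qmx0 dotq0.
Qed.

Lemma character_global z :
  z *m Q = 0 -> gamma (qmx z) -> global (fun m => if m == z then 1 else 0).
Proof.
move=> zQ gz; split; [split|].
- by exists [:: z] => m; case: (eqVneq m z) => [->|]; rewrite ?mem_head ?eqxx.
- by move=> m; case: (eqVneq m z) => [-> //|]; rewrite eqxx.
- move=> sigma [g0 [_ sigma_face]] m; case: (eqVneq m z) => [-> _|]; last by rewrite eqxx.
  by move=> u /(face_subcone sigma_face) [u_dual _]; apply: u_dual.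
Qed.

Lemma cone_ker_trivial_of_constant :
  global = @constant_functions r kk -> cone_ker_trivial Q gamma.
Proof.
move=> global_const x gx xQ; have [c c_gt0 [z zE]] := clear_denominators x.
have zQ : z *m Q = 0 by apply: qmx_inj; rewrite qmxM zE -scalemxAl xQ scaler0 qmx0.
have gz : gamma (qmx z) by rewrite zE cone_genE in gx *; apply: cone_rowsZ (ltW c_gt0) gx.
have := character_global zQ gz; rewrite global_const => /(_ z).
rewrite eqxx oner_neq0 => /(_ isT) z0.
by move: zE; rewrite z0 qmx0 => /esym/eqP; rewrite scaler_eq0 gt_eqF //= => /eqP.
Qed.

Hypotheses (G_unit : G \in unitmx)
  (Hbunch : is_bunch Q gamma Theta) (Hstd : is_standard Q gamma Theta).

Lemma covers_facet j : covers Q Theta (cone_rows G [set~ j]).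
Proof.
have [_ [tau [Theta_tau tau_relint]]] := Hstd (is_facet_row G_unit j).
have [_ [/(is_face_cone_gen G_unit) [I ->] tauE]] := Hbunch.2.1 tau Theta_tau.
exists tau; split=> //; rewrite tauE !image_cone_rows in tau_relint *.
by apply: cone_rows_of_relint => y /tau_relint [].
Qed.

Lemma ex_cov_avoiding j :
  exists I : {set 'I_r}, j \notin I /\ cov Q gamma Theta (cone_rows G I).
Proof.
have [I [Ij covI minI]] :=
  @ex_minimal_subset _ (fun I => covers Q Theta (cone_rows G I)) _ (covers_facet j).
exists I; split; first by apply/negP => /(subsetP Ij); rewrite !inE eqxx.
split; first exact: cone_rows_face.
split=> // g g_face g_sub g_cov.
have [I1 gE] := is_face_cone_gen G_unit g_face; rewrite gE in g_sub g_cov *.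
by rewrite (minI I1) // (cone_rows_subcone_subset G_unit (face_subcone g_sub)).
Qed.

Lemma global_function_support f m : global f -> f m != 0 -> gamma (qmx m).
Proof.
move=> [_ f_fan] fm; apply: (cone_gen_coord G_unit) => j.
have [I [jI covI]] := ex_cov_avoiding j.
have fan : fan_cone Q gamma Theta (face_star gamma (cone_rows G I)).
  by exists (cone_rows G I); split; last exact: is_face_refl.
have dual_coord : face_star gamma (cone_rows G I) (delta_mx 0 j *m (invmx G)^T).
  by split=> [_ [a [a0 ->]]|_ [a [_ aI ->]]]; rewrite (dotq_dual_coord G_unit) ?aI.
have := f_fan _ fan m fm _ dual_coord.
by rewrite -{1}[qmx m](mulmxKV G_unit) (dotq_dual_coord G_unit).
Qed.

Lemma global_functions_constant :
  cone_ker_trivial Q gamma -> global = @constant_functions r kk.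
Proof.
move=> kerQ; apply: functional_extensionality => f; apply: propositional_extensionality.
split=> [global_f m fm|]; last exact: constant_global.
have [[_ fQ] _] := global_f; apply: qmx_inj; rewrite qmx0; apply: kerQ.
  exact: global_function_support global_f fm.
by rewrite -qmxM fQ // qmx0.
Qed.

End GlobalFunctions.

Theorem proposition7p4
  (kk : closedFieldType) (char0 : [pchar kk] =i pred0)
  (r k : nat) (Q : 'M[int]_(r, k))
  (Qsurj : forall y : 'rV[int]_k, exists x : 'rV[int]_r, x *m Q = y)
  (G : 'M[rat]_r) (Gsimpl : G \in unitmx)
  (Theta : qcone k -> Prop)
  (Hbunch : is_bunch Q (cone_gen G) Theta)
  (Hstd : is_standard Q (cone_gen G) Theta) :
  global_functions Q (cone_gen G) (kk:=kk) Theta = @constant_functions r kk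
  <->
  ((forall rho, is_ray rho (cone_gen G) ->
      image_cone Q rho <> (fun y => y = 0)) /\
   strictly_convex (image_cone Q (cone_gen G))).
Proof.
split=> [global_const | [rays_nonzero pointed]].
  have kerQ := cone_ker_trivial_of_constant global_const.
  split=> [rho /(ray_image_neq0 kerQ) //|].
  exact: strictly_convex_image_cone Gsimpl kerQ.
have kerQ := cone_ker_trivial_of_image Gsimpl rays_nonzero pointed.
exact: global_functions_constant Gsimpl Hbunch Hstd kerQ.
Qed.
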